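(* Let $\mathfrak{S}=(\mathcal{X},\mathsf{S},\gamma,(\Lambda_{a})_{a\in\mathcal{A}})$ be a spectral decomposition system for the Euclidean space $\mathfrak{H}$, and let $\varphi\colon\mathcal{X}\to\left]-\infty,+\infty\right]$ be $\mathsf{S}$-invariant. Then: (i) $\varphi\circ\gamma$ is convex if and only if $\varphi$ is convex; (ii) if $\varphi$ is proper, then $\varphi\circ\gamma\in\Gamma_0(\mathfrak{H})$ if and only if $\varphi\in\Gamma_0(\mathcal{X})$.
   Context: A Euclidean space is a finite-dimensional real inner product space; inner products are written $\langle\cdot,\cdot\rangle$ and norms $\|\cdot\|$. Let $\mathfrak{H}$ and $\mathcal{X}$ be Euclidean spaces, let $\mathsf{S}$ be a group acting on $\mathcal{X}$ by linear isometries, let $\gamma\colon\mathfrak{H}\to\mathcal{X}$, and let $(\Lambda_a)_{a\in\mathcal{A}}$ be a family of linear operators from $\mathcal{X}$ to $\mathfrak{H}$. The orbit of $x$ is $\mathsf{S}\cdot x=\{s\cdot x: s\in\mathsf{S}\}$; a map $f$ on $\mathcal{X}$ is $\mathsf{S}$-invariant if $f(s\cdot x)=f(x)$ for all $s\in\mathsf{S}$, $x\in\mathcal{X}$. The tuple is a spectral decomposition system for $\mathfrak{H}$ if: [A] every $\Lambda_a$ is an isometry; [B] there exists an $\mathsf{S}$-invariant $\tau\colon\mathcal{X}\to\mathcal{X}$ with $\tau(x)\in\mathsf{S}\cdot x$ for all $x$ and $\gamma\circ\Lambda_a=\tau$ for all $a$; [C] for every $X\in\mathfrak{H}$ there is $a$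 with $X=\Lambda_a\gamma(X)$; [D] $\langle X,Y\rangle\leq\langle\gamma(X),\gamma(Y)\rangle$ for all $X,Y\in\mathfrak{H}$. For a function $f$ on a Euclidean space, $\operatorname{dom}f=\{x: f(x)<+\infty\}$; $f$ is convex if $f(\alpha x+(1-\alpha)y)\leq\alpha f(x)+(1-\alpha)f(y)$ for all $x,y\in\operatorname{dom}f$, $\alpha\in\left]0,1\right[$; $f$ is proper if it never takes $-\infty$ and $\operatorname{dom}f\neq\varnothing$; $\Gamma_0(\mathcal{H})$ is the set of proper lower semicontinuous convex functions $\mathcal{H}\to\left]-\infty,+\infty\right]$. *)

From HB Require Import structures.
From mathcomp Require Import all_boot all_order all_algebra.
From mathcomp Require Import all_classical all_reals all_analysis.
Set Implicit Arguments. Unset Strict Implicit. Unset Printing Implicit Defensive.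
Import Order.TTheory GRing.Theory Num.Theory.
Import numFieldNormedType.Exports.
Local Open Scope classical_set_scope.
Local Open Scope ring_scope.

(* Euclidean spaces are modelled as 'rV[R]_n with the standard inner product
   (every Euclidean space is isometrically isomorphic to one of these). *)
Definition dotv (R : realType) (n : nat) (u v : 'rV[R]_n) : R := (u *m v^T) 0 0.
Definition eucnorm (R : realType) (n : nat) (u : 'rV[R]_n) : R :=
  Num.sqrt (dotv u u).

Definition is_linear_map (R : realType) (m n : nat) (f : 'rV[R]_m -> 'rV[R]_n) :=
  forall (c : R) (u v : 'rV[R]_m), f (c *: u + v) = c *: f u + f v.

Definition is_isometry (R : realType) (m n : nat) (f : 'rV[R]_m -> 'rV[R]_n) :=
  forall u, eucnorm (f u) = eucnorm u.

Definition is_group (G : Type) (mul : G -> G -> G) (one : G) (inv : G -> G) :=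
  [/\ forall a b c, mul a (mul b c) = mul (mul a b) c,
      forall a, mul one a = a /\ mul a one = a &
      forall a, mul (inv a) a = one /\ mul a (inv a) = one].

Definition is_isometric_linear_action (R : realType) (m : nat) (G : Type)
    (mul : G -> G -> G) (one : G) (act : G -> 'rV[R]_m -> 'rV[R]_m) :=
  [/\ forall x, act one x = x,
      forall s t x, act (mul s t) x = act s (act t x),
      forall s, is_linear_map (act s) &
      forall s, is_isometry (act s)].

Definition orbit (R : realType) (m : nat) (G : Type)
    (act : G -> 'rV[R]_m -> 'rV[R]_m) (x : 'rV[R]_m) : set 'rV[R]_m :=
  [set act s x | s in [set: G]].

Definition S_invariant (R : realType) (m : nat) (G : Type) (T : Type)
    (act : G -> 'rV[R]_m -> 'rV[R]_m) (f : 'rV[R]_m -> T) :=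
  forall s x, f (act s x) = f x.

Definition spectral_decomposition_system (R : realType) (n m : nat)
    (G : Type) (mul : G -> G -> G) (one : G) (inv : G -> G)
    (act : G -> 'rV[R]_m -> 'rV[R]_m)
    (gamma : 'rV[R]_n -> 'rV[R]_m) (A : Type)
    (Lambda : A -> 'rV[R]_m -> 'rV[R]_n) :=
  [/\ is_group mul one inv,
      is_isometric_linear_action mul one act,
      forall a, is_linear_map (Lambda a) &
    [/\ forall a, is_isometry (Lambda a),
      (exists tau : 'rV[R]_m -> 'rV[R]_m,
                  [/\ S_invariant act tau,
                      forall x, orbit act x (tau x) &
                      forall a x, gamma (Lambda a x) = tau x]),
      (forall X, exists a, X = Lambda a (gamma X)) &
      forall X Y, dotv X Y <= dotv (gamma X) (gamma Y)]].

Local Open Scope ereal_scope.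

Definition edom (R : realType) (n : nat) (f : 'rV[R]_n -> \bar R) :
  set 'rV[R]_n := [set x | f x < +oo].

Definition econvex (R : realType) (n : nat) (f : 'rV[R]_n -> \bar R) :=
  forall x y (al : R), edom f x -> edom f y -> (0 < al < 1)%R ->
    f (al *: x + (1 - al) *: y)%R <= al%:E * f x + (1 - al)%:E * f y.

Definition eproper (R : realType) (n : nat) (f : 'rV[R]_n -> \bar R) :=
  (forall x, f x != -oo) /\ edom f !=set0.

Definition Gamma0 (R : realType) (n : nat) (f : 'rV[R]_n -> \bar R) :=
  [/\ eproper f, lower_semicontinuous f & econvex f].

From Pilot Require Import Defs.
From HB Require Import structures.
From mathcomp Require Import all_boot all_order all_algebra.
From mathcomp Require Import all_classical all_reals all_analysis.
From mathcomp Require Import ring lra.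
Set Implicit Arguments. Unset Strict Implicit. Unset Printing Implicit Defensive.
Import Order.TTheory GRing.Theory Num.Theory.
Import numFieldNormedType.Exports.
Local Open Scope classical_set_scope.
Local Open Scope ring_scope.

(** For [Z = t X + (1 - t) Y] choose [b] with [Z = Lambda_b (gamma Z)];
    since [Lambda_b] is a linear isometry, [gamma Z = Lambda_b^* Z = t Lambda_b^* X +
    (1 - t) Lambda_b^* Y].  By [D], [<c, Lambda_b^* W> <= <tau c, gamma W>] for every
    [c], i.e. [Lambda_b^* W] is majorized by [gamma W]; a nearest-point argument in
    the convex hull of the compact orbit of [gamma W] (closed by Carathéodory's
    theorem) puts [Lambda_b^* W] in that hull, and Jensen's inequality for the convex
    S-invariant [phi] gives [phi (Lambda_b^* W) <= phi (gamma W)], whence the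
    convexity of [phi \o gamma].  Conversely [phi = (phi \o gamma) \o Lambda_a], and
    lower semicontinuity transfers along the continuous maps [Lambda_a] and the
    1-Lipschitz [gamma]. *)

Section InnerProduct.
Variable R : realType.
Implicit Types p q : nat.

Lemma dotvE p (u v : 'rV[R]_p) : dotv u v = \sum_j u 0 j * v 0 j.
Proof. by rewrite /dotv !mxE; apply: eq_bigr => j _; rewrite mxE. Qed.

Lemma dotvC p (u v : 'rV[R]_p) : dotv u v = dotv v u.
Proof. by rewrite !dotvE; apply: eq_bigr => j _; rewrite mulrC. Qed.

Lemma dotvDl p (u v w : 'rV[R]_p) : dotv (u + v) w = dotv u w + dotv v w.
Proof. by rewrite !dotvE -big_split; apply: eq_bigr => j _; rewrite !mxE mulrDl. Qed.

Lemma dotvZl p a (u w : 'rV[R]_p) : dotv (a *: u) w = a * dotv u w.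
Proof. by rewrite !dotvE mulr_sumr; apply: eq_bigr => j _; rewrite !mxE mulrA. Qed.

Lemma dotvBl p (u v w : 'rV[R]_p) : dotv (u - v) w = dotv u w - dotv v w.
Proof. by rewrite dotvDl -scaleN1r dotvZl mulN1r. Qed.

Lemma dotvDr p (u v w : 'rV[R]_p) : dotv w (u + v) = dotv w u + dotv w v.
Proof. by rewrite dotvC dotvDl !(dotvC w). Qed.

Lemma dotvZr p a (u w : 'rV[R]_p) : dotv w (a *: u) = a * dotv w u.
Proof. by rewrite dotvC dotvZl dotvC. Qed.

Lemma dotvBr p (u v w : 'rV[R]_p) : dotv w (u - v) = dotv w u - dotv w v.
Proof. by rewrite dotvC dotvBl !(dotvC w). Qed.

Lemma dotvv_ge0 p (u : 'rV[R]_p) : 0 <= dotv u u.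
Proof. by rewrite dotvE; apply: sumr_ge0 => j _; rewrite -expr2 sqr_ge0. Qed.

Lemma dotvv_eq0 p (u : 'rV[R]_p) : (dotv u u == 0) = (u == 0).
Proof.
apply/idP/eqP => [|->]; last by rewrite dotvE big1 // => j _; rewrite mxE mul0r.
rewrite dotvE psumr_eq0 => [/allP u0|j _]; last by rewrite -expr2 sqr_ge0.
apply/rowP => j; rewrite mxE; apply/eqP.
by have := u0 j (mem_index_enum j); rewrite implyTb -expr2 sqrf_eq0.
Qed.

Lemma dotv_ext p (u v : 'rV[R]_p) : (forall c, dotv c u = dotv c v) -> u = v.
Proof.
by move=> uv; apply/eqP; rewrite -subr_eq0 -dotvv_eq0 dotvBr !uv subrr.
Qed.

Lemma mul_rV_lin1_map p q (f : 'rV[R]_p -> 'rV[R]_q) :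
  is_linear_map f -> forall u, u *m lin1_mx f = f u.
Proof.
move=> f_lin; pose fL : {linear 'rV[R]_p -> 'rV[R]_q} :=
  HB.pack f (GRing.isLinear.Build _ _ _ _ f (fun a u v => f_lin a u v)).
exact: (mul_rV_lin1 fL).
Qed.

Lemma linear_isometry_dotv p q (f : 'rV[R]_p -> 'rV[R]_q) :
  is_linear_map f -> is_isometry f -> forall u v, dotv (f u) (f v) = dotv u v.
Proof.
move=> /mul_rV_lin1_map fE f_iso.
have fuu u : dotv (f u) (f u) = dotv u u.
  by apply/eqP; rewrite -eqr_sqrt ?dotvv_ge0 //; apply/eqP; exact: f_iso.
move=> u v; have := fuu (u + v); rewrite -fE mulmxDl !fE !dotvDl !dotvDr !fuu.
by rewrite (dotvC (f v)) (dotvC v); lra.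
Qed.

Definition adjoint p q (f : 'rV[R]_p -> 'rV[R]_q) (X : 'rV[R]_q) : 'rV[R]_p :=
  X *m (lin1_mx f)^T.

Lemma adjointP p q (f : 'rV[R]_p -> 'rV[R]_q) :
  is_linear_map f -> forall c X, dotv c (adjoint f X) = dotv (f c) X.
Proof.
by move=> /mul_rV_lin1_map fE c X; rewrite /dotv /adjoint -fE trmx_mul trmxK mulmxA.
Qed.

Lemma adjointK p q (f : 'rV[R]_p -> 'rV[R]_q) :
  is_linear_map f -> is_isometry f -> cancel f (adjoint f).
Proof.
by move=> f_lin f_iso x; apply: dotv_ext => c; rewrite adjointP ?linear_isometry_dotv.
Qed.

End InnerProduct.

Section Continuity.
Variable R : realType.
Implicit Types p q : nat.

Lemma lipschitz_continuous (V W : normedModType R) (k : R) (f : V -> W) :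
  (forall x y, `|f x - f y| <= k * `|x - y|) -> continuous f.
Proof.
move=> f_lip x; apply/cvgrPdist_lt => e e_gt0.
have d_gt0 : 0 < e / (`|k| + 1) by rewrite divr_gt0 // ltr_wpDl.
have de : e / (`|k| + 1) * (`|k| + 1) = e by rewrite divfK // gt_eqF // ltr_wpDl.
near=> y; apply: le_lt_trans (f_lip x y) _.
have xy : `|x - y| < e / (`|k| + 1) by near: y; exact: cvgr_dist_lt.
have := normr_ge0 (x - y); have := ler_norm k; have := normr_ge0 k; nra.
Unshelve. all: by end_near.
Qed.

Lemma normr_le_sqrt_dotv p (v : 'rV[R]_p) : `|v| <= Num.sqrt (dotv v v).
Proof.
rewrite [leLHS]mx_normrE; apply: bigmax_le => [|[i j] _]; first exact: sqrtr_ge0.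
rewrite (ord1 i) -ler_sqr ?nnegrE ?sqrtr_ge0 // sqr_sqrtr ?dotvv_ge0 //.
rewrite real_normK ?num_real // dotvE (bigD1 j) //= -expr2 lerDl.
by apply: sumr_ge0 => k _; rewrite -expr2 sqr_ge0.
Qed.

Lemma sqrt_dotv_le_normr p (v : 'rV[R]_p) :
  Num.sqrt (dotv v v) <= Num.sqrt p%:R * `|v|.
Proof.
rewrite -[`|v|]normr_id -sqrtr_sqr -sqrtrM // ler_sqrt ?mulr_ge0 ?sqr_ge0 //.
have -> : p%:R * `|v| ^+ 2 = \sum_(j < p) `|v| ^+ 2.
  by rewrite sumr_const card_ord mulr_natl.
rewrite dotvE; apply: ler_sum => j _; rewrite -expr2 -real_normK ?num_real //.
rewrite ler_sqr ?nnegrE ?normr_ge0 // [leRHS]mx_normrE.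
exact: (le_bigmax _ (fun ij : 'I_1 * 'I_p => `|v ij.1 ij.2|) (0, j)).
Qed.

Lemma dotv_lipschitz_continuous p q (f : 'rV[R]_p -> 'rV[R]_q) :
  (forall x y, dotv (f x - f y) (f x - f y) <= dotv (x - y) (x - y)) ->
  continuous f.
Proof.
move=> f_lip; apply: (@lipschitz_continuous _ _ (Num.sqrt p%:R)) => x y.
apply: le_trans (normr_le_sqrt_dotv _) (le_trans _ (sqrt_dotv_le_normr _)).
by rewrite ler_sqrt ?dotvv_ge0.
Qed.

Lemma dotvv_continuous p : continuous (fun v : 'rV[R]_p => dotv v v).
Proof.
move=> v; under eq_fun do rewrite dotvE.
apply: (cvg_big add_continuous) => [|j _]; first exact: nbhs_filter.
by apply: continuousM; exact: coord_continuous.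
Qed.

End Continuity.

Section SegmentHull.
Variables (R : realType) (m : nat) (K : set 'rV[R]_m).

Definition interp (q : R * ('rV[R]_m * 'rV[R]_m)) : 'rV[R]_m :=
  (1 - q.1) *: q.2.1 + q.1 *: q.2.2.

Lemma interp0 x z : interp (0, (x, z)) = x.
Proof. by rewrite /interp subr0 scale1r scale0r addr0. Qed.

Lemma interp1 x z : interp (1, (x, z)) = z.
Proof. by rewrite /interp subrr scale0r add0r scale1r. Qed.

Lemma interp_continuous : continuous interp.
Proof.
have -> : interp = (fun q => (1 - q.1) *: q.2.1) + (fun q => q.1 *: q.2.2) by [].
move=> q; apply: continuousD; apply: continuousZ.
- by apply: continuousB; [exact: cst_continuous | exact: cvg_fst].
- by apply: continuous_comp; [exact: cvg_snd | exact: cvg_fst].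
- exact: cvg_fst.
- by apply: continuous_comp; [exact: cvg_snd | exact: cvg_snd].
Qed.

(* [seg_hull k] is the set of convex combinations of [k + 1] points of [K]
   ([seg_hull_sub_convn], [convn_sub_seg_hull]); its recursive form makes
   compactness and Jensen's inequality immediate. *)
Fixpoint seg_hull k : set 'rV[R]_m :=
  if k is k'.+1 then interp @` (`[0, 1]%classic `*` (seg_hull k' `*` K)) else K.

Lemma seg_hull_compact : compact K -> forall k, compact (seg_hull k).
Proof.
move=> K_compact; elim=> [//|k IHk] /=.
apply: continuous_compact; first exact: continuous_subspaceT interp_continuous.
by apply: compact_setX; [exact: segment_compact | exact: compact_setX].
Qed.

Lemma seg_hull_neq0 : K !=set0 -> forall k, seg_hull k !=set0.
Proof.
move=> [z Kz]; elim=> [|k [x hx]] /=; first by exists z.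
by exists x, (0, (x, z)); rewrite ?interp0 //= in_itv /= lexx ler01.
Qed.

Local Open Scope ereal_scope.

Lemma econvex_le_seg_hull (phi : 'rV[R]_m -> \bar R) (r : R) : econvex phi ->
  (forall z, K z -> phi z <= r%:E) -> forall k x, seg_hull k x -> phi x <= r%:E.
Proof.
move=> phi_cvx phi_le; elim=> [//|k IHk] _ /= [[t [x z]] [/= t01 [hx Kz]] <-].
move: t01; rewrite in_itv /= => /andP[t_ge0 t_le1].
have [->|t_neq0] := eqVneq t 0%R; first by rewrite interp0; exact: IHk.
have [->|t_neq1] := eqVneq t 1%R; first by rewrite interp1; exact: phi_le.
have dom_le y : phi y <= r%:E -> edom phi y by move/le_lt_trans; apply; exact: ltry.
have t01 : (0 < 1 - t < 1)%R.
  by rewrite subr_gt0 gtrBl !lt_neqAle t_le1 t_ge0 t_neq1 eq_sym t_neq0.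
have := phi_cvx _ _ _ (dom_le _ (IHk _ hx)) (dom_le _ (phi_le _ Kz)) t01.
rewrite [(1 - (1 - t))%R]subKr => /le_trans; apply.
have -> : r%:E = (1 - t)%:E * r%:E + t%:E * r%:E.
  by rewrite -!EFinM -EFinD mulrBl mul1r subrK.
apply: leeD; apply: lee_wpmul2l; rewrite ?lee_fin ?subr_ge0 //; [exact: IHk | exact: phi_le].
Qed.

End SegmentHull.

Section Caratheodory.
Variables (R : realType) (m : nat) (K : set 'rV[R]_m).

Definition convn k : set 'rV[R]_m :=
  [set x | exists (l : 'I_k -> R) (z : 'I_k -> 'rV[R]_m),
    [/\ forall i, 0 <= l i, \sum_i l i = 1, forall i, K (z i) &
        x = \sum_i l i *: z i]].

Lemma seg_hull_sub_convn k : seg_hull K k `<=` convn k.+1.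
Proof.
elim: k => [x Kx|k IHk _ /= [[t [_ z]] [/= t01 [/IHk [l [y [l_ge0 l1 Ky ->]]] Kz]] <-]].
  by exists (fun=> 1), (fun=> x); rewrite !big_ord1 scale1r.
move: t01; rewrite in_itv /= => /andP[t_ge0 t_le1].
exists (fun i : 'I_k.+2 => if unlift ord_max i is Some j then (1 - t) * l j else t).
exists (fun i : 'I_k.+2 => if unlift ord_max i is Some j then y j else z).
split=> [i||i|]; first by case: unliftP => [j|] _ //; rewrite mulr_ge0 ?subr_ge0.
- rewrite (bigD1_ord ord_max) //= unlift_none; under eq_bigr do rewrite liftK.
  by rewrite -mulr_sumr l1 mulr1 addrC subrK.
- by case: unliftP.
rewrite [in RHS](bigD1_ord ord_max) //= unlift_none; under [in RHS]eq_bigr do rewrite liftK.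
by rewrite /interp addrC scaler_sumr; congr (_ + _); apply: eq_bigr => i _; rewrite scalerA.
Qed.

Lemma convn_sub_seg_hull k : K !=set0 -> convn k.+1 `<=` seg_hull K k.
Proof.
move=> K_neq0; elim: k => [|k IHk] _ [l [z [l_ge0 l1 Kz ->]]].
  by move: l1; rewrite !big_ord1 => ->; rewrite scale1r.
rewrite (bigD1_ord ord_max) //=; move: l1; rewrite (bigD1_ord ord_max) //=.
set t := l ord_max => l1.
have l_sum_ge0 : 0 <= \sum_(i < k.+1) l (lift ord_max i) by rewrite sumr_ge0.
have [t1|t_neq1] := eqVneq t 1.
  have l0 i : l (lift ord_max i) = 0.
    have l_sum0 : \sum_(i < k.+1) l (lift ord_max i) = 0 by lra.
    by apply: (psumr_eq0P _ l_sum0) => // j _; exact: l_ge0.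
  have [x hx] := seg_hull_neq0 K_neq0 k.
  exists (1, (x, z ord_max)); first by rewrite /= in_itv /= ler01 lexx.
  by rewrite interp1 t1 scale1r big1 ?addr0 // => i _; rewrite l0 scale0r.
have s_gt0 : 0 < 1 - t by rewrite subr_gt0 lt_neqAle t_neq1; lra.
exists (t, (\sum_(i < k.+1) (l (lift ord_max i) / (1 - t)) *: z (lift ord_max i), z ord_max)).
  split=> /=; first by rewrite in_itv /= l_ge0 -subr_ge0 ltW.
  split=> //; apply: IHk.
  exists (fun i : 'I_k.+1 => l (lift ord_max i) / (1 - t)), (fun i => z (lift ord_max i)).
  split=> // [i|]; first exact: divr_ge0 (l_ge0 _) (ltW s_gt0).
  by rewrite -mulr_suml (_ : \sum_(i < k.+1) _ = 1 - t) ?divff ?gt_eqF //; lra.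
rewrite /interp addrC scaler_sumr; congr (_ + _); apply: eq_bigr => i _.
by rewrite scalerA mulrC divfK ?gt_eqF.
Qed.

Lemma affine_dependence k (z : 'I_k -> 'rV[R]_m) : (m.+1 < k)%N ->
  exists mu : 'I_k -> R,
    [/\ exists i, 0 < mu i, \sum_i mu i = 0 & \sum_i mu i *: z i = 0].
Proof.
move=> m_lt_k; pose M : 'M[R]_(k, 1 + m) := \matrix_i row_mx (const_mx 1) (z i).
have /rowV0Pn[v] : kermx M != 0.
  rewrite kermx_eq0 /row_free; apply/negP => /eqP rkM.
  by have := rank_leq_col M; rewrite rkM add1n leqNgt m_lt_k.
rewrite sub_kermx => /eqP vM v_neq0.
have mu_sum : \sum_i v 0 i = 0.
  transitivity ((v *m M) 0 (lshift m 0)); last by rewrite vM mxE.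
  by rewrite mxE; apply: eq_bigr => i _; rewrite mxE row_mxEl mxE mulr1.
exists (v 0); split=> //.
  apply/existsP; apply: contraNT v_neq0 => /existsPn v_le0.
  have v_sum0 : \sum_i - v 0 i = 0 by rewrite sumrN mu_sum oppr0.
  have v_ge0 i : 0 <= - v 0 i by rewrite oppr_ge0 leNgt v_le0.
  have vN0 := psumr_eq0P (fun i _ => v_ge0 i) v_sum0.
  by apply/eqP/rowP => i; rewrite mxE; apply/eqP; rewrite -oppr_eq0 vN0.
apply/rowP => j; rewrite summxE mxE.
transitivity ((v *m M) 0 (rshift 1 j)); last by rewrite vM mxE.
by rewrite mxE; apply: eq_bigr => i _; rewrite [M _ _]mxE row_mxEr mxE.
Qed.

(* Carathéodory: more than [m + 1] points of ['rV_m] are affinely dependent,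
   so one weight can be cancelled. *)
Lemma convn_reduce k : (m.+1 < k.+1)%N -> convn k.+1 `<=` convn k.
Proof.
move=> m_lt_k _ [l [z [l_ge0 l1 Kz ->]]].
have [mu [[i1 mu_i1] mu_sum mu_z]] := affine_dependence z m_lt_k.
have [i0 mu_i0 i0_min] :=
  @arg_minP _ _ _ i1 (fun i => 0 < mu i) (fun i => l i / mu i) mu_i1.
pose t := l i0 / mu i0; pose l' i := l i - t * mu i.
have l'_ge0 i : 0 <= l' i.
  rewrite subr_ge0; have [mu_gt0|mu_le0] := ltrP 0 (mu i).
    by rewrite -ler_pdivlMr //; exact: i0_min.
  have t_ge0 : 0 <= t by rewrite divr_ge0 ?l_ge0 ?ltW.
  exact: le_trans (mulr_ge0_le0 t_ge0 mu_le0) (l_ge0 i).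
have l'_i0 : l' i0 = 0 by rewrite /l' /t divfK ?subrr ?gt_eqF.
have l'_sum : \sum_i l' i = 1 by rewrite sumrB -mulr_sumr mu_sum mulr0 subr0.
have l'_z : \sum_i l' i *: z i = \sum_i l i *: z i.
  under eq_bigr do rewrite scalerBl -scalerA.
  by rewrite sumrB -scaler_sumr mu_z scaler0 subr0.
exists (fun j => l' (lift i0 j)), (fun j => z (lift i0 j)); split=> //.
- by move: l'_sum; rewrite (bigD1_ord i0) //= l'_i0 add0r.
- by rewrite -l'_z (bigD1_ord i0) //= l'_i0 scale0r add0r.
Qed.

Lemma seg_hull_succ_sub : K !=set0 -> seg_hull K m.+1 `<=` seg_hull K m.
Proof.
move=> K_neq0 x /seg_hull_sub_convn /(convn_reduce (ltnSn _)).
exact: convn_sub_seg_hull.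
Qed.

End Caratheodory.

Section NearestPoint.
Variables (R : realType) (m : nat).

Lemma nearest_point_obtuse (w x z : 'rV[R]_m) :
  (forall t, 0 < t <= 1 -> dotv (w - x) (w - x) <=
     dotv (w - interp (t, (x, z))) (w - interp (t, (x, z)))) ->
  dotv (w - x) (z - x) <= 0.
Proof.
move=> x_min.
have le_t t : 0 < t <= 1 -> 2 * dotv (w - x) (z - x) <= t * dotv (z - x) (z - x).
  move=> /[dup] /andP[t_gt0 _] /x_min.
  have -> : w - interp (t, (x, z)) = (w - x) - t *: (z - x).
    by apply/rowP => j; rewrite /interp !mxE /=; ring.
  move: (w - x) (z - x) => c d.
  by rewrite !dotvBl !dotvBr !dotvZl !dotvZr (dotvC d c); nra.
set a := dotv _ _ in le_t *; set b := dotv _ _ in le_t.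
have b_ge0 : 0 <= b by exact: dotvv_ge0.
rewrite leNgt; apply/negP => a_gt0; set u := a / (a + b).
have ab_gt0 : 0 < a + b by rewrite ltr_pwDl.
have ua : u * (a + b) = a by rewrite divfK ?gt_eqF.
have u_gt0 : 0 < u by rewrite divr_gt0.
have := le_t u; rewrite u_gt0 ler_pdivrMr // mul1r lerDl b_ge0 => /(_ isT); nra.
Qed.

Lemma mem_seg_hull_of_support (K : set 'rV[R]_m) (w : 'rV[R]_m) :
  compact K -> K !=set0 -> (forall c, exists2 z, K z & dotv c w <= dotv c z) ->
  seg_hull K m w.
Proof.
move=> K_compact K_neq0 w_support.
have dist_w : continuous (fun x : 'rV[R]_m => dotv (w - x) (w - x)).
  rewrite (_ : (fun x => _) = (fun v => dotv v v) \o (fun x => w - x)) //.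
  move=> x; apply: continuous_comp; last exact: dotvv_continuous.
  by apply: continuousB => //; exact: cst_continuous.
have [x /set_mem x_hull x_min] := EVT_min_rV (seg_hull_neq0 K_neq0 m)
  (seg_hull_compact (k := m) K_compact) (continuous_subspaceT dist_w).
have obtuse z : K z -> dotv (w - x) (z - x) <= 0.
  move=> Kz; apply: nearest_point_obtuse => t /andP[t_gt0 t_le1].
  apply/x_min/mem_set/seg_hull_succ_sub => //.
  by exists (t, (x, z)) => //=; rewrite in_itv /= ltW.
have [z Kz wz] := w_support (w - x); have := obtuse z Kz.
rewrite dotvBr => zx; have : dotv (w - x) (w - x) <= 0 by rewrite [leLHS]dotvBr; lra.
by rewrite le_eqVlt ltNge dotvv_ge0 orbF dotvv_eq0 subr_eq0 => /eqP ->.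
Qed.

End NearestPoint.

Lemma lower_semicontinuous_comp (T U : topologicalType) (R : numFieldType)
    (f : U -> \bar R) (g : T -> U) :
  lower_semicontinuous f -> continuous g -> lower_semicontinuous (f \o g).
Proof.
move=> f_lsc g_cont x a /f_lsc[V gxV fV].
by exists (g @^-1` V); [exact: g_cont | move=> y; exact: fV].
Qed.

Lemma econvex_comp_linear (R : realType) p q (f : 'rV[R]_q -> \bar R)
    (L : 'rV[R]_p -> 'rV[R]_q) :
  is_linear_map L -> econvex f -> econvex (f \o L).
Proof.
move=> /mul_rV_lin1_map LE f_cvx x y a x_dom y_dom a01 /=.
by rewrite -LE mulmxDl -!scalemxAl !LE; exact: f_cvx.
Qed.

Section SpectralDecomposition.
Variables (R : realType) (n m : nat) (G : Type) (mul : G -> G -> G) (one : G)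
  (inv : G -> G) (act : G -> 'rV[R]_m -> 'rV[R]_m)
  (gamma : 'rV[R]_n -> 'rV[R]_m) (A : Type)
  (Lambda : A -> 'rV[R]_m -> 'rV[R]_n) (tau : 'rV[R]_m -> 'rV[R]_m).
Hypotheses (G_group : is_group mul one inv)
  (act_isometric : is_isometric_linear_action mul one act)
  (Lambda_linear : forall a, is_linear_map (Lambda a))
  (Lambda_isometry : forall a, is_isometry (Lambda a))
  (tau_invariant : S_invariant act tau)
  (tau_orbit : forall x, Defs.orbit act x (tau x))
  (gamma_Lambda : forall a x, gamma (Lambda a x) = tau x)
  (Lambda_gamma : forall X, exists a, X = Lambda a (gamma X))
  (dotv_le_gamma : forall X Y, dotv X Y <= dotv (gamma X) (gamma Y)).

Lemma act_dotv s x y : dotv (act s x) (act s y) = dotv x y.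
Proof. by case: act_isometric => _ _ lin iso; exact: linear_isometry_dotv. Qed.

Lemma act_Kinv s : cancel (act (inv s)) (act s).
Proof.
case: G_group => _ _ mulV; case: act_isometric => act1 actM _ _ x.
by rewrite -actM (mulV s).2 act1.
Qed.

Lemma Lambda_dotv a x y : dotv (Lambda a x) (Lambda a y) = dotv x y.
Proof. exact: linear_isometry_dotv. Qed.

Lemma tau_act x : exists s, tau x = act s x.
Proof. by have [s _ <-] := tau_orbit x; exists s. Qed.

Lemma tau_gamma X : tau (gamma X) = gamma X.
Proof. by have [a {2}->] := Lambda_gamma X; rewrite gamma_Lambda. Qed.

Lemma invariant_tau (T : Type) (f : 'rV[R]_m -> T) :
  S_invariant act f -> forall x, f (tau x) = f x.
Proof. by move=> f_inv x; have [s ->] := tau_act x. Qed.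

Lemma gamma_continuous : continuous gamma.
Proof.
apply: dotv_lipschitz_continuous => X Y.
have dotvv_gamma Z : dotv (gamma Z) (gamma Z) = dotv Z Z.
  by have [a aZ] := Lambda_gamma Z; rewrite [in RHS]aZ Lambda_dotv.
rewrite !dotvBl !dotvBr !dotvv_gamma (dotvC (gamma Y)) (dotvC Y).
by have := dotv_le_gamma X Y; lra.
Qed.

Lemma Lambda_continuous a : continuous (Lambda a).
Proof.
apply: dotv_lipschitz_continuous => x y.
have LB : Lambda a x - Lambda a y = Lambda a (x - y).
  by rewrite -!(mul_rV_lin1_map (Lambda_linear a)) mulmxBl.
by rewrite LB Lambda_dotv.
Qed.

Lemma tau_continuous : continuous tau.
Proof.
have [a _] := Lambda_gamma 0.
have -> : tau = gamma \o Lambda a by apply/funext => x /=; rewrite gamma_Lambda.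
by move=> x; apply: continuous_comp; [exact: Lambda_continuous | exact: gamma_continuous].
Qed.

Lemma tau_fiber_compact g : compact (tau @^-1` [set g]).
Proof.
apply: bounded_closed_compact.
  exists (Num.sqrt (dotv g g)); split; first exact: num_real.
  move=> M /ltW gM x /= tx; apply: le_trans (normr_le_sqrt_dotv x) _.
  by have [s sx] := tau_act x; rewrite -(act_dotv s) -sx tx.
apply: preimage_closed; first by move=> x _; exact: tau_continuous.
exact/accessible_closed_set1/hausdorff_accessible/norm_hausdorff.
Qed.

Lemma majorized_mem_seg_hull g w : tau g = g ->
  (forall c, dotv c w <= dotv (tau c) g) -> seg_hull (tau @^-1` [set g]) m w.
Proof.
move=> tau_g w_maj; apply: mem_seg_hull_of_support.
- exact: tau_fiber_compact.
- by exists g.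
move=> c; have [s sc] := tau_act c.
exists (act (inv s) g); first by rewrite /= tau_invariant.
by rewrite -[leRHS](act_dotv s) act_Kinv -sc.
Qed.

Lemma comp_gamma_Lambda (T : Type) (f : 'rV[R]_m -> T) a :
  S_invariant act f -> (f \o gamma) \o Lambda a = f.
Proof. by move=> f_inv; apply/funext => x /=; rewrite gamma_Lambda invariant_tau. Qed.

Local Open Scope ereal_scope.
Variable phi : 'rV[R]_m -> \bar R.
Hypotheses (phi_ninfty : forall x, phi x != -oo) (phi_invariant : S_invariant act phi).

Lemma econvex_le_adjoint a W :
  econvex phi -> phi (adjoint (Lambda a) W) <= phi (gamma W).
Proof.
move=> phi_cvx.
case E : (phi (gamma W)) => [r| |]; last 2 first.
- exact: leey.
- by move: (phi_ninfty (gamma W)); rewrite E.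
have W_hull : seg_hull (tau @^-1` [set gamma W]) m (adjoint (Lambda a) W).
  apply: majorized_mem_seg_hull; first exact: tau_gamma.
  by move=> c; rewrite adjointP // -(gamma_Lambda a c); exact: dotv_le_gamma.
apply: (econvex_le_seg_hull phi_cvx _ W_hull).
by move=> z /= tz; rewrite -E -tz invariant_tau.
Qed.

Lemma econvex_comp_gamma : econvex phi -> econvex (phi \o gamma).
Proof.
move=> phi_cvx X Y t X_dom Y_dom t01 /=.
set Z := (t *: X + (1 - t) *: Y)%R; have [b bZ] := Lambda_gamma Z.
pose L := adjoint (Lambda b).
have gammaZ : gamma Z = (t *: L X + (1 - t) *: L Y)%R.
  rewrite -[LHS](adjointK (Lambda_linear b) (Lambda_isometry b)) -bZ.
  by rewrite /L /adjoint mulmxDl -!scalemxAl.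
have le_gamma W : phi (L W) <= phi (gamma W) by exact: econvex_le_adjoint.
have L_dom W : edom (phi \o gamma) W -> edom phi (L W) by exact/le_lt_trans/le_gamma.
rewrite gammaZ; apply: le_trans (phi_cvx _ _ _ (L_dom _ X_dom) (L_dom _ Y_dom) t01) _.
case/andP: t01 => t_gt0 t_lt1.
by apply: leeD; apply: lee_wpmul2l => //; rewrite lee_fin ?subr_ge0 ltW.
Qed.

Lemma econvex_of_comp_gamma : econvex (phi \o gamma) -> econvex phi.
Proof.
have [a _] := Lambda_gamma 0.
by rewrite -{2}(comp_gamma_Lambda a phi_invariant); exact: econvex_comp_linear.
Qed.

Lemma econvex_comp_gammaE : econvex (phi \o gamma) <-> econvex phi.
Proof. by split; [exact: econvex_of_comp_gamma | exact: econvex_comp_gamma]. Qed.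

Lemma Gamma0_comp_gamma : Gamma0 (phi \o gamma) <-> Gamma0 phi.
Proof.
have [a _] := Lambda_gamma 0; have phiE := comp_gamma_Lambda a phi_invariant.
split=> -[[_ [x x_dom]] lsc cvx]; split.
- by split=> //; exists (gamma x).
- by rewrite -phiE; apply: (lower_semicontinuous_comp lsc); exact: Lambda_continuous.
- exact: econvex_of_comp_gamma.
- split=> [y|]; first exact: phi_ninfty.
  by exists (Lambda a x); rewrite /edom /= gamma_Lambda invariant_tau.
- by apply: (lower_semicontinuous_comp lsc); exact: gamma_continuous.
- exact: econvex_comp_gamma.
Qed.

End SpectralDecomposition.

Theorem theorem4p6 (R : realType) (n m : nat)
    (G : Type) (mul : G -> G -> G) (one : G) (inv : G -> G)
    (act : G -> 'rV[R]_m -> 'rV[R]_m)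
    (gamma : 'rV[R]_n -> 'rV[R]_m) (A : Type)
    (Lambda : A -> 'rV[R]_m -> 'rV[R]_n)
    (phi : 'rV[R]_m -> \bar R) :
  spectral_decomposition_system mul one inv act gamma Lambda ->
  (forall x, phi x != -oo%E) ->
  S_invariant act phi ->
  (econvex (phi \o gamma) <-> econvex phi) /\
  (eproper phi -> (Gamma0 (phi \o gamma) <-> Gamma0 phi)).
Proof.
move=> [G_grp act_iso L_lin [L_iso [tau [tau_inv tau_orb gL]] Lg le_gamma]].
move=> phi_ninfty phi_inv; split.
  exact (econvex_comp_gammaE G_grp act_iso L_lin L_iso tau_inv tau_orb gL Lg
    le_gamma phi_ninfty phi_inv).
(* Properness is part of [Gamma0]. *)
move=> _; exact (Gamma0_comp_gamma G_grp act_iso L_lin L_iso tau_inv tau_orb gL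
  Lg le_gamma phi_ninfty phi_inv).
Qed.
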